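(* Let $L$ be an infinite field, let $\mathcal{T}$ be a non-discrete system of topologies over $L$, let $m\ge1$, and let $O$ be a nonempty $\mathcal{T}$-open subset of $L^m$. Then $|O| = |L|$.
   Context: An $L$-variety is a separated $L$-scheme of finite type (not necessarily reduced); $V(L)$ denotes its set of $L$-points. A system of topologies $\mathcal{T}$ over $L$ is a choice of topology on $V(L)$ for every $L$-variety $V$ such that for every morphism $f: V \to W$ of $L$-varieties: (1) the induced map $V(L) \to W(L)$ is continuous; (2) if $f$ is an open immersion then $V(L) \to W(L)$ is a topological open embedding; (3) if $f$ is a closed immersion then $V(L)\to W(L)$ is a topological closed embedding. $\mathcal{T}$ is called discrete if the $\mathcal{T}$-topology on $L = \mathbb{A}^1_L(L)$ is discrete, and non-discrete otherwise. *)

From HB Require Import structures.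
From mathcomp Require Import all_boot all_order all_algebra.
From mathcomp Require Import mpoly.
Set Implicit Arguments. Unset Strict Implicit. Unset Printing Implicit Defensive.
Import GRing.Theory.
Local Open Scope ring_scope.

(* Affine L-varieties (not necessarily reduced): an affine L-variety is
   Spec L[x_0..x_{n-1}]/I for an ideal I, represented by the pair (n, I). *)

Section AffineVarieties.
Variable L : fieldType.

Definition is_ideal (n : nat) (I : {mpoly L[n]} -> Prop) : Prop :=
  [/\ I 0,
      forall p q, I p -> I q -> I (p + q) &
      forall a p, I p -> I (a * p)].

Definition points (n : nat) (I : {mpoly L[n]} -> Prop) (x : 'I_n -> L) : Prop :=
  forall p, I p -> p.@[x] = 0.

(* A morphism Spec L[x_0..x_{n-1}]/I -> Spec L[y_0..y_{m-1}]/J is given by the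
   L-algebra map L[y]/J -> L[x]/I, y_j |-> phi_j, required to be well defined. *)
Definition pullback (n m : nat) (phi : m.-tuple {mpoly L[n]}) (g : {mpoly L[m]})
  : {mpoly L[n]} := comp_mpoly phi g.

Definition is_morphism (n : nat) (I : {mpoly L[n]} -> Prop)
    (m : nat) (J : {mpoly L[m]} -> Prop) (phi : m.-tuple {mpoly L[n]}) : Prop :=
  forall g, J g -> I (pullback phi g).

Definition point_map (n m : nat) (phi : m.-tuple {mpoly L[n]}) (x : 'I_n -> L)
  : 'I_m -> L := fun j => (tnth phi j).@[x].

(* Closed immersion: L[y]/J -> L[x]/I surjective. *)
Definition closed_immersion (n : nat) (I : {mpoly L[n]} -> Prop)
    (m : nat) (J : {mpoly L[m]} -> Prop) (phi : m.-tuple {mpoly L[n]}) : Prop :=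
  is_morphism I J phi /\
  forall a : {mpoly L[n]}, exists b : {mpoly L[m]}, I (a - pullback phi b).

(* Open immersion of affine schemes Spec A -> Spec B with h : B -> A:
   there are g_1..g_k in B such that the h(g_i) generate the unit ideal of A
   and each induced map B_{g_i} -> A_{h(g_i)} is an isomorphism. *)
Definition open_immersion (n : nat) (I : {mpoly L[n]} -> Prop)
    (m : nat) (J : {mpoly L[m]} -> Prop) (phi : m.-tuple {mpoly L[n]}) : Prop :=
  is_morphism I J phi /\
  exists gs : seq {mpoly L[m]},
    (exists cs : seq {mpoly L[n]},
        I (1 - \sum_(i < size gs) cs`_i * pullback phi gs`_i)) /\
    (forall g, g \in gs ->
       (* injectivity of B_g -> A_{h g} *)
       (forall b : {mpoly L[m]},
          (exists k : nat, I (pullback phi g ^+ k * pullback phi b)) ->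
          exists k : nat, J (g ^+ k * b)) /\
       (* surjectivity of B_g -> A_{h g} *)
       (forall a : {mpoly L[n]}, exists (b : {mpoly L[m]}) (e k : nat),
          I (pullback phi g ^+ k * (pullback phi b - pullback phi g ^+ e * a)))).

Definition is_topology (T : Type) (S : T -> Prop) (opens : (T -> Prop) -> Prop)
  : Prop :=
  [/\ forall U, opens U -> forall x, U x -> S x,
      opens S,
      forall (F : (T -> Prop) -> Prop), (forall U, F U -> opens U) ->
        opens (fun x => exists2 U, F U & U x) &
      forall U V, opens U -> opens V -> opens (fun x => U x /\ V x)].

(* A system of topologies over L (on affine L-varieties):
   sys n I is the family of open subsets of points I. *)
Definition system_of_topologies
    (sys : forall n : nat, ({mpoly L[n]} -> Prop) -> (('I_n -> L) -> Prop) -> Prop)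
  : Prop :=
  [/\
   forall n (I : {mpoly L[n]} -> Prop), is_ideal I -> is_topology (points I) (sys n I),
   forall n (I : {mpoly L[n]} -> Prop) m (J : {mpoly L[m]} -> Prop) phi,
     is_ideal I -> is_ideal J -> is_morphism I J phi ->
     forall U, sys m J U -> sys n I (fun x => points I x /\ U (point_map phi x)),
   (* (2) open immersions induce topological open embeddings *)
   forall n (I : {mpoly L[n]} -> Prop) m (J : {mpoly L[m]} -> Prop) phi,
     is_ideal I -> is_ideal J -> open_immersion I J phi ->
     (forall x y, points I x -> points I y -> point_map phi x = point_map phi y -> x = y) /\
     (forall U, sys n I U ->
        sys m J (fun y => exists2 x, U x & point_map phi x = y)) &
   (* (3) closed immersions induce topological closed embeddings *)
   forall n (I : {mpoly L[n]} -> Prop) m (J : {mpoly L[m]} -> Prop) phi,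
     is_ideal I -> is_ideal J -> closed_immersion I J phi ->
     (forall x y, points I x -> points I y -> point_map phi x = point_map phi y -> x = y) /\
     (forall U, sys n I U ->
        (* image of the closed set points I \ U is closed in points J *)
        sys m J (fun y => points J y /\
                  ~ exists2 x, (points I x /\ ~ U x) & point_map phi x = y))].

(* The zero ideal: Spec L[x_0..x_{m-1}] = affine m-space, with points L^m. *)
Definition zero_ideal (m : nat) : {mpoly L[m]} -> Prop := fun p => p = 0.

(* Discrete: every subset of L = A^1(L) is open. *)
Definition discrete_system
    (sys : forall n : nat, ({mpoly L[n]} -> Prop) -> (('I_n -> L) -> Prop) -> Prop)
  : Prop := forall U : ('I_1 -> L) -> Prop, sys 1 (@zero_ideal 1) U.

Definition infinite_type (T : eqType) : Prop := forall s : seq T, exists x, x \notin s.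

End AffineVarieties.

From mathcomp Require Import all_boot all_order all_algebra.
From mathcomp Require Import mpoly.
From mathcomp Require Import boolp classical_sets functions cardinality.

(* Restrict O to the line [t |-> a + t e_i] through a point [a] of [O]: this
   gives an open subset [S] of the line containing [0].  Translations and
   homotheties of the line are morphisms, so in a non-discrete system no point
   of an open subset of the line is isolated.  Applied to [S `&` c^-1 S] this
   gives, for each [c != 0], some [v != 0] with [v] and [c v] in [S]; hence
   every element of [L] is a quotient of two elements of [S] and
   |L| <= |S x S|.  Hessenberg's theorem |X x X| = |X| for infinite [X],
   proved here with Zorn's lemma, then yields |L| <= |S| <= |O| <= |L^m| = |L|,
   and Cantor-Bernstein concludes. *)

Set Implicit Arguments. Unset Strict Implicit. Unset Printing Implicit Defensive.
Import GRing.Theory.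
Local Open Scope classical_set_scope.
Local Open Scope card_scope.

Lemma set_inj_card_le T U (A : set T) (B : set U) (f : T -> U) :
  set_fun A B f -> set_inj A f -> A #<= B.
Proof.
move=> fAB finj; have [g] : $|{injfun A >-> B}| by apply/injfunPex; exists f.
exact: inj_card_le g.
Qed.

Lemma card_setX_le T T' U U' (A : set T) (A' : set T') (B : set U) (B' : set U') :
  A #<= A' -> B #<= B' -> A `*` B #<= A' `*` B'.
Proof.
elim/Ppointed: T' => T' in A' *.
  by rewrite empty_eq0 => /card_le0P-> _; rewrite set0X card_ge0.
elim/Ppointed: U' => U' in B' *.
  by rewrite empty_eq0 => _ /card_le0P->; rewrite setX0 card_ge0.
move=> /pcard_leP/injfunPex[f fA finj] /pcard_leP/injfunPex[g gB ginj].
apply: (set_inj_card_le (f := fun p => (f p.1, g p.2))).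
  by move=> [x y] [/= /fA ? /gB ?].
move=> [x y] [x' y'] /set_mem[/= Ax By] /set_mem[/= Ax' By'] [].
move=> /(finj _ _ (mem_set Ax) (mem_set Ax'))->.
by move=> /(ginj _ _ (mem_set By) (mem_set By'))->.
Qed.

Lemma card_eq_bijective T U (A : set T) :
  A #= [set: U] -> exists f : {x | A x} -> U, bijective f.
Proof.
move=> /card_bijP[f fbij].
pose toA (x : {x | A x}) : A := SigSub (mem_set (proj2_sig x)).
pose ofA (x : A) : {x | A x} := exist _ (val x) (set_mem (valP x)).
pose toT (y : U) : [set: U] := SigSub (mem_set (I : [set: U] y)).
have toAK : cancel toA ofA by case=> x Ax; apply: eq_exist.
have ofAK : cancel ofA toA by move=> x; apply: val_inj.
have valK : cancel val toT by move=> y; apply: val_inj.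
exists (val \o f \o toA).
apply: bij_comp; last by exists ofA.
by apply: bij_comp => //; exists toT.
Qed.

Lemma total_on_subset_ub T (F : set (set T)) G1 G2 :
  total_on F subset -> F G1 -> F G2 -> exists2 G, F G & G1 `<=` G /\ G2 `<=` G.
Proof.
move=> Ftot FG1 FG2; have [G12|G21] := Ftot _ _ FG1 FG2.
  by exists G2 => //; split.
by exists G1 => //; split.
Qed.

(** * Comparability of cardinals *)

Section PartialInjection.
Context {T U : Type}.
Implicit Types R S : set (T * U).

Definition partial_inj R :=
  (forall x y y', R (x, y) -> R (x, y') -> y = y') /\
  (forall x x' y, R (x, y) -> R (x', y) -> x = x').

Lemma partial_inj_bigcup (F : set (set (T * U))) :
  F `<=` partial_inj -> total_on F subset -> partial_inj (\bigcup_(R in F) R).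
Proof.
move=> Finj Ftot; split.
  move=> x y y' [R1 FR1 R1y] [R2 FR2 R2y'].
  have [R /Finj[Rfun _] [R1R R2R]] := total_on_subset_ub Ftot FR1 FR2.
  exact: Rfun (R1R _ R1y) (R2R _ R2y').
move=> x x' y [R1 FR1 R1x] [R2 FR2 R2x'].
have [R /Finj[_ Rinj] [R1R R2R]] := total_on_subset_ub Ftot FR1 FR2.
exact: Rinj (R1R _ R1x) (R2R _ R2x').
Qed.

Lemma partial_injU R S :
  partial_inj R -> partial_inj S ->
  (forall x y y', R (x, y) -> ~ S (x, y')) ->
  (forall x x' y, R (x, y) -> ~ S (x', y)) ->
  partial_inj (R `|` S).
Proof.
move=> [Rfun Rinj] [Sfun Sinj] RSdom RSran; split.
  move=> x y y' [Rxy|Sxy] [Rxy'|Sxy'].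
  - exact: Rfun Rxy Rxy'.
  - by case: (RSdom _ _ _ Rxy Sxy').
  - by case: (RSdom _ _ _ Rxy' Sxy).
  - exact: Sfun Sxy Sxy'.
move=> x x' y [Rxy|Sxy] [Rx'y|Sx'y].
- exact: Rinj Rxy Rx'y.
- by case: (RSran _ _ _ Rxy Sx'y).
- by case: (RSran _ _ _ Rx'y Sxy).
- exact: Sinj Sxy Sx'y.
Qed.

Lemma partial_inj_graph (f : T -> U) (A : set T) :
  set_inj A f -> partial_inj [set (x, f x) | x in A].
Proof.
move=> finj; split; first by move=> x y y' [u _ [<- <-]] [u' _ [-> <-]].
move=> x x' y [u Au [<- <-]] [u' Au' [<- fuu']].
exact: finj (mem_set Au) (mem_set Au') (esym fuu').
Qed.

End PartialInjection.

Lemma partial_inj_converse T U (R : set (T * U)) :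
  partial_inj R -> partial_inj [set p : U * T | R (p.2, p.1)].
Proof. by move=> [Rfun Rinj]; split=> [x y y'|x x' y]; [apply: Rinj|apply: Rfun]. Qed.

Lemma partial_inj_card_le T (U : pointedType) (R : set (T * U)) (A : set T) (B : set U) :
  partial_inj R -> (forall x, A x -> exists2 y, B y & R (x, y)) -> A #<= B.
Proof.
move=> [_ Rinj] AR; pose f x := get [set y | B y /\ R (x, y)].
have fP x : A x -> B (f x) /\ R (x, f x).
  by move=> /AR[y By Rxy]; apply: (@getPex _ [set y | B y /\ R (x, y)]); exists y.
apply: (set_inj_card_le (f := f)); first by move=> x /fP[].
move=> x x' /set_mem/fP[_ Rx] /set_mem/fP[_ Rx'] fxx'.
by apply: Rinj Rx _; rewrite fxx'.
Qed.

Lemma card_le_total T U (A : set T) (B : set U) : A #<= B \/ B #<= A.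
Proof.
elim/Ppointed: T => T in A *; first by left; rewrite emptyE.
elim/Ppointed: U => U in B *; first by right; rewrite emptyE.
pose P (R : set (T * U)) := R `<=` A `*` B /\ partial_inj R.
have [R [[RAB Rinj] Rmax]] : exists R, P R /\ forall S, R `<` S -> ~ P S.
  apply: Zorn_bigcup => F FP Ftot; split.
    by move=> p [R /FP[RAB _]]; apply: RAB.
  by apply: partial_inj_bigcup => // R /FP[].
have [AR|/existsNP[x /not_implyP[Ax xR]]] :=
  pselect (forall x, A x -> exists2 y, B y & R (x, y)).
  by left; apply: partial_inj_card_le AR.
have [BR|/existsNP[y /not_implyP[By yR]]] :=
  pselect (forall y, B y -> exists2 x, A x & R (x, y)).
  by right; apply: partial_inj_card_le (partial_inj_converse Rinj) _.
exfalso; apply: (Rmax (R `|` [set (x, y)])).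
  split; first exact: subsetUl.
  by move=> /(_ (x, y) (or_intror erefl)) Rxy; apply: xR; exists y.
split; first by move=> p [/RAB//|->].
apply: partial_injU => //.
- by split=> [? ? ? [_ ->] [_ ->]|? ? ? [-> _] [-> _]].
- move=> x' y1 y2 Rxy1 [xx' _]; rewrite xx' in Rxy1.
  by apply: xR; exists y1 => //; case: (RAB _ Rxy1).
- move=> x1 x2 y' Rxy1 [_ yy']; rewrite yy' in Rxy1.
  by apply: yR; exists x1 => //; case: (RAB _ Rxy1).
Qed.

(** * Hessenberg's theorem *)

Section PairingGraph.
Context {T : Type}.
Implicit Types (A : set T) (G : set (T * T * T)).

Definition pairing_dom G : set T := [set p.1.1 | p in G].

(* Injections [A `*` A -> A] are handled through their graphs, so that the
   union of a chain of them is again one. *)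
Definition pairing_on A G :=
  [/\ partial_inj G, G `<=` (A `*` A) `*` A &
      forall x y, A x -> A y -> exists z, G (x, y, z)].

Lemma pairing_on_dom A G : pairing_on A G -> pairing_dom G = A.
Proof.
case=> _ GA Atot; apply/seteqP; split; first by move=> _ [p /GA[[Ap _] _] <-].
by move=> x Ax; have [z Gz] := Atot x x Ax Ax; exists (x, x, z).
Qed.

Lemma pairing_on_bigcup (F : set (set (T * T * T))) :
  (forall G, F G -> pairing_on (pairing_dom G) G) -> total_on F subset ->
  pairing_on (pairing_dom (\bigcup_(G in F) G)) (\bigcup_(G in F) G).
Proof.
move=> Fpair Ftot; set U := \bigcup_(G in F) G.
have domU G : F G -> pairing_dom G `<=` pairing_dom U.
  by move=> FG; apply/image_subset/bigcup_sup.
split.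
- by apply: partial_inj_bigcup => // G /Fpair[].
- move=> p [G FG Gp]; have [_ GG _] := Fpair G FG.
  by apply: setSX (domU G FG) (setSX (domU G FG) (domU G FG)) _ (GG p Gp).
- move=> x y [p [G1 FG1 G1p] <-] [q [G2 FG2 G2q] <-].
  have [G FG [G1G G2G]] := total_on_subset_ub Ftot FG1 FG2.
  have [_ _ Gtot] := Fpair G FG.
  have Gx : pairing_dom G p.1.1 by exists p => //; apply: G1G.
  have Gy : pairing_dom G q.1.1 by exists q => //; apply: G2G.
  by have [z Gz] := Gtot _ _ Gx Gy; exists z; exists G.
Qed.

Lemma pairing_on_graph A (f : T * T -> T) :
  set_fun (A `*` A) A f -> set_inj (A `*` A) f ->
  pairing_on A [set (p, f p) | p in A `*` A].
Proof.
move=> fA finj; split; first exact: partial_inj_graph.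
  by move=> _ [p Ap <-]; split => //; apply: fA.
by move=> x y Ax Ay; exists (f (x, y)); exists (x, y).
Qed.

End PairingGraph.

Section PointedHessenberg.
Context {T : pointedType}.
Implicit Types (A B X : set T) (G : set (T * T * T)).

Lemma card_setU_le A B :
  infinite_set A -> A `*` A #<= A -> B #<= A -> A `|` B #<= A.
Proof.
move=> Ainf AA /pcard_leP/injfunPex[g gA ginj].
have boolA : [set: bool] #<= A by apply: card_le_trans (countableP _) _; apply/infiniteP.
apply: card_le_trans _ AA; apply: card_le_trans _ (card_setX_le (card_lexx A) boolA).
pose h x := if pselect (A x) then (x, true) else (g x, false).
apply: (set_inj_card_le (f := h)).
  by move=> x; rewrite /h; case: pselect => [Ax _|nAx [//|/gA]].
move=> x y /set_mem Ux /set_mem Uy; rewrite /h.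
case: (pselect (A x)) => Ax; case: (pselect (A y)) => Ay [] //.
by apply: ginj; rewrite inE; [case: Ux|case: Uy].
Qed.

Lemma pairing_on_card_le A G : pairing_on A G -> A `*` A #<= A.
Proof.
case=> Ginj GA Atot; apply: partial_inj_card_le Ginj _ => -[x y] [/= Ax Ay].
by have [z Gz] := Atot x y Ax Ay; exists z => //; case: (GA _ Gz).
Qed.

Lemma pairing_on_extend A B G :
  pairing_on A G -> infinite_set A -> A `&` B = set0 -> A #<= B -> B #<= A ->
  exists2 G', G `<=` G' & pairing_on (A `|` B) G'.
Proof.
move=> Gpair Ainf AB0 AB BA; set D := (A `|` B) `*` (A `|` B) `\` A `*` A.
have AA := pairing_on_card_le Gpair.
have UA := card_setU_le Ainf AA BA.
have /pcard_leP/injfunPex[k kB kinj] : D #<= B.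
  apply: card_le_trans (subset_card_le (@subDsetl _ _ _)) _.
  exact: card_le_trans (card_setX_le UA UA) (card_le_trans AA AB).
have disjAB z : A z -> B z -> False.
  by move=> Az Bz; have : (A `&` B) z by []; rewrite AB0.
case: Gpair => Ginj GA Atot.
exists (G `|` [set (p, k p) | p in D]); first exact: subsetUl.
split.
- apply: partial_injU => //; first exact: partial_inj_graph.
    move=> p z z' /GA[Ap _] [q [_ nAq] [qp _]].
    by apply: nAq; rewrite qp; exact: Ap.
  move=> p p' z /GA[_ Az] [q /kB Bkq [_ kqz]]; subst z.
  exact: disjAB Az Bkq.
- move=> q [/GA[[Aq1 Aq2] Aq3]|[p Dp <-]].
    by split; [split|]; left.
  by split; [case: Dp|right; apply: kB].
- move=> x y Ux Uy; have [[Ax Ay]|nAxy] := pselect (A x /\ A y).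
    by have [z Gz] := Atot x y Ax Ay; exists z; left.
  by exists (k (x, y)); right; exists (x, y).
Qed.

Lemma exists_pairing_subset X : infinite_set X ->
  exists N, [/\ N `<=` X, infinite_set N & N `*` N #<= N].
Proof.
move=> /infiniteP/pcard_leP/injfunPex[e eX einj].
have /card_eqPle[eN Ne] : range e #= [set: nat] := inj_card_eq einj.
exists (range e); split; first by move=> _ [n _ <-]; apply: eX.
  by apply/infiniteP.
apply: card_le_trans (card_setX_le eN eN) _; rewrite setXTT.
by apply: card_le_trans Ne; case/card_eqPle: card_nat2.
Qed.

Lemma exists_maximal_pairing_subset X : infinite_set X ->
  exists A, [/\ A `<=` X, infinite_set A, A `*` A #<= A & ~ (A #<= X `\` A)].
Proof.
move=> /exists_pairing_subset[N [NX Ninf /pcard_leP/injfunPex[f0 f0N f0inj]]].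
(* The empty graph has to be admitted: it is the union of the empty chain. *)
pose P G := [/\ pairing_on (pairing_dom G) G, pairing_dom G `<=` X &
                G !=set0 -> infinite_set (pairing_dom G)].
have [G [[Gpair GX GNinf] Gmax]] : exists G, P G /\ forall G', G `<` G' -> ~ P G'.
  apply: Zorn_bigcup => F FP Ftot; split.
  - by apply: pairing_on_bigcup => // G /FP[].
  - by move=> _ [p [G FG Gp] <-]; have [_ GX _] := FP G FG; apply: GX; exists p.
  - move=> [p [G FG Gp]]; have [_ _ Ginf] := FP G FG.
    by apply: sub_infinite_set (Ginf (ex_intro _ p Gp)); apply/image_subset/bigcup_sup.
set A := pairing_dom G.
have Ainf : infinite_set A.
  apply: GNinf; apply: contrapT => /forallNP G0.
  have Npair := pairing_on_graph f0N f0inj.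
  have [n Nn] := infinite_setN0 Ninf.
  apply: (Gmax [set (p, f0 p) | p in N `*` N]); last first.
    by rewrite /P (pairing_on_dom Npair); split.
  split; first by move=> p /G0.
  by move=> /(_ ((n, n), f0 (n, n))) Gn; apply: (G0 _ (Gn _)); exists (n, n).
exists A; split => //; first exact: pairing_on_card_le Gpair.
move=> /pcard_leP/injfunPex[g gXA ginj]; set B := g @` A.
have /card_eqPle[BA AB] : B #= A := inj_card_eq ginj.
have AB0 : A `&` B = set0.
  by apply/seteqP; split => // x [Ax [a /gXA[_ nAga] gax]]; apply: nAga; rewrite gax.
have [G' GG' G'pair] := pairing_on_extend Gpair Ainf AB0 AB BA.
have [a Aa] := infinite_setN0 Ainf.
apply: (Gmax G').
  split => // G'G; have [_ /= nAga] := gXA a Aa; apply: nAga.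
  have : pairing_dom G' (g a) by rewrite (pairing_on_dom G'pair); right; exists a.
  exact: image_subset G'G (g a).
rewrite /P (pairing_on_dom G'pair); split => //.
- by move=> x [/GX|[a' /gXA[Xga _] <-]].
- by move=> _; apply: sub_infinite_set Ainf; exact: subsetUl.
Qed.

Lemma pcard_setXX_le X : infinite_set X -> X `*` X #<= X.
Proof.
move=> /exists_maximal_pairing_subset[A [AX Ainf AA AnXA]].
have XA : X #<= A.
  have [XAA|//] := card_le_total (X `\` A) A.
  have XU : X `<=` A `|` (X `\` A) by rewrite setDUK.
  exact: card_le_trans (subset_card_le XU) (card_setU_le Ainf AA XAA).
apply: card_le_trans (card_setX_le XA XA) _.
exact: card_le_trans AA (subset_card_le AX).
Qed.

End PointedHessenberg.

Theorem card_setXX T (X : set T) : infinite_set X -> X `*` X #= X.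
Proof.
elim/Ppointed: T => T in X *; first by rewrite empty_eq0 => /(_ (finite_set0 _)).
move=> Xinf; apply/card_eqPle; split; first exact: pcard_setXX_le.
by apply: (set_inj_card_le (f := fun x => (x, x))) => [x Xx|x y _ _ []].
Qed.

Lemma card_fun_ord_le T m : infinite_set [set: T] -> [set: 'I_m -> T] #<= [set: T].
Proof.
move=> Tinf; elim: m => [|m IHm].
  have [t _] := infinite_setN0 Tinf.
  apply: (set_inj_card_le (f := fun _ => t)) => // f g _ _ _.
  by apply: funext => -[].
have /card_eqPle[TT _] := card_setXX Tinf.
apply: card_le_trans _ (card_le_trans (card_setX_le (card_lexx _) IHm) TT).
apply: (set_inj_card_le (f := fun f => (f ord0, f \o lift ord0))) => // f g _ _.
case=> f0 fg; apply: funext => i; have [j ->|->] := unliftP ord0 i => //.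
exact: (congr1 (@^~ j) fg).
Qed.

Lemma infinite_type_setT (T : eqType) : infinite_type T -> infinite_set [set: T].
Proof.
move=> Tinf /finite_seqP[s sT]; have [x /negP] := Tinf s; apply.
by have : [set` s] x by rewrite -sT.
Qed.

(** * Open subsets of affine space *)

Local Open Scope ring_scope.

Section AffineSpace.
Context {L : fieldType}.

Lemma zero_ideal_is_ideal n : is_ideal (@zero_ideal L n).
Proof. by split => // [p q -> ->|a p ->]; rewrite ?addr0 ?mulr0. Qed.

Lemma points_zero_ideal n (x : 'I_n -> L) : points (@zero_ideal L n) x.
Proof. by move=> p ->; rewrite meval0. Qed.

Lemma zero_ideal_morphism n m (phi : m.-tuple {mpoly L[n]}) :
  is_morphism (@zero_ideal L n) (@zero_ideal L m) phi.
Proof. by move=> g ->; rewrite /pullback comp_mpoly0. Qed.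

Definition affine_line m (a v : 'I_m -> L) : m.-tuple {mpoly L[1]} :=
  [tuple (a j)%:MP + v j *: 'X_ord0 | j < m].

Lemma point_map_affine_line m (a v : 'I_m -> L) x :
  point_map (affine_line a v) x = (fun j => a j + v j * x ord0).
Proof.
by apply/funext => j; rewrite /point_map tnth_mktuple mevalD mevalC mevalZ mevalXU.
Qed.

End AffineSpace.

Section SystemOfTopologies.
Variables (L : fieldType)
  (sys : forall n : nat, ({mpoly L[n]} -> Prop) -> (('I_n -> L) -> Prop) -> Prop).
Hypothesis sys_top : system_of_topologies sys.

Definition affine_open n (U : set ('I_n -> L)) := @sys n (@zero_ideal L n) U.

Definition line_open (S : set L) := affine_open (fun x : 'I_1 -> L => S (x ord0)).

Lemma affine_open_preimage n m (phi : m.-tuple {mpoly L[n]}) U :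
  affine_open U -> affine_open (U \o point_map phi).
Proof.
move=> Uopen; have [_ cont _ _] := sys_top.
have := cont _ _ _ _ phi (zero_ideal_is_ideal _) (zero_ideal_is_ideal _)
  (zero_ideal_morphism phi) U Uopen.
suff -> : (fun x => points (@zero_ideal L n) x /\ U (point_map phi x)) =
          U \o point_map phi by [].
by apply/funext => x; apply/propext; split=> [[]//|]; split=> //; apply: points_zero_ideal.
Qed.

Lemma affine_openI n (U V : set ('I_n -> L)) :
  affine_open U -> affine_open V -> affine_open (U `&` V).
Proof.
have [/(_ n _ (zero_ideal_is_ideal n))[_ _ _ opensI] _ _ _] := sys_top.
exact: opensI.
Qed.

Lemma affine_open_bigcup n (F : set (set ('I_n -> L))) :
  (forall U, F U -> affine_open U) -> affine_open (\bigcup_(U in F) U).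
Proof.
have [/(_ n _ (zero_ideal_is_ideal n))[_ _ opensU _] _ _ _] := sys_top.
exact: opensU.
Qed.

Lemma line_open_preimage m (a v : 'I_m -> L) U :
  affine_open U -> line_open [set t | U (fun j => a j + v j * t)].
Proof.
move=> /(affine_open_preimage (affine_line a v)); rewrite /line_open.
by congr affine_open; apply/funext => x; rewrite /= point_map_affine_line.
Qed.

Lemma line_open_affine S (a v : L) : line_open S -> line_open [set t | S (a + v * t)].
Proof. exact: (line_open_preimage (fun=> a) (fun=> v)). Qed.

Lemma line_openI S S' : line_open S -> line_open S' -> line_open (S `&` S').
Proof. exact: affine_openI. Qed.

Hypothesis nondiscrete : ~ discrete_system sys.

Lemma line_open_nonisolated S t : line_open S -> S t -> exists2 u, S u & u <> t.
Proof.
move=> Sopen St; apply: contrapT => noS; apply: nondiscrete => U.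
(* Otherwise [[set t]] is open, hence by translation every singleton, hence every set. *)
have onlyt u : S u -> u = t by move=> Su; apply: contrapT => ut; apply: noS; exists u.
have point_open s : affine_open [set x : 'I_1 -> L | x ord0 = s].
  have := line_open_affine (t - s) 1 Sopen; congr affine_open.
  apply/funext => x; apply/propext; split => [/onlyt|/= ->]; last by rewrite mul1r subrK.
  by rewrite mul1r => xt; apply: (addrI (t - s)); rewrite xt subrK.
have -> : U = \bigcup_(V in [set [set x | x ord0 = y ord0] | y in U]) V.
  apply/funext => x; apply/propext; split => [Ux|[_ [y Uy <-] xy]].
    by exists [set z | z ord0 = x ord0] => //; exists x.
  by have -> : x = y by apply/funext => i; rewrite (ord1 i).
by apply: affine_open_bigcup => _ [y _ <-].
Qed.

Lemma line_open_quotients S :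
  line_open S -> S 0 -> [set: L] `<=` [set p.1 / p.2 | p in S `*` S].
Proof.
move=> Sopen S0 c _; have [->|c0] := eqVneq c 0.
  by exists (0, 0) => //=; rewrite mul0r.
have S0' : (S `&` [set t | S (0 + c * t)]) 0 by split; rewrite //= mulr0 addr0.
have [v [Sv Scv] v0] :=
  line_open_nonisolated (line_openI Sopen (line_open_affine 0 c Sopen)) S0'.
by exists (c * v, v); [split; rewrite //= -[c * v]add0r|rewrite /= mulfK //; apply/eqP].
Qed.

Lemma line_open_card_le S :
  infinite_set [set: L] -> line_open S -> S 0 -> [set: L] #<= S.
Proof.
move=> Linf Sopen S0.
have LSS : [set: L] #<= S `*` S.
  have [f] : $|{surj (S `*` S) >-> [set: L]}|.
    by apply/surjPex; exists (fun p => p.1 / p.2); exact: line_open_quotients.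
  exact: surj_card_ge f.
have Sinf : infinite_set S by move=> Sfin; apply/Linf/(card_le_finite LSS)/finite_setX.
by apply: card_le_trans LSS _; case/card_eqPle: (card_setXX Sinf).
Qed.

End SystemOfTopologies.

Theorem proposition4p2 (L : fieldType)
  (sys : forall n : nat, ({mpoly L[n]} -> Prop) -> (('I_n -> L) -> Prop) -> Prop)
  (m : nat) (O : ('I_m -> L) -> Prop) :
  infinite_type L ->
  system_of_topologies sys ->
  ~ discrete_system sys ->
  (0 < m)%N ->
  sys m (@zero_ideal L m) O ->
  (exists x, O x) ->
  exists f : {x : 'I_m -> L | O x} -> L, bijective f.
Proof.
move=> /infinite_type_setT Linf sys_top nondiscrete m_gt0 Oopen [a Oa].
pose i0 := Ordinal m_gt0; pose e : 'I_m -> L := fun j => (j == i0)%:R.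
pose S := [set t | O (fun j => a j + e j * t)].
have Sopen : line_open sys S := line_open_preimage sys_top a e Oopen.
have S0 : S 0.
  rewrite /S /=; suff -> : (fun j => a j + e j * 0) = a by [].
  by apply/funext => j; rewrite mulr0 addr0.
have LO : [set: L] #<= O.
  apply: card_le_trans (line_open_card_le sys_top nondiscrete Linf Sopen S0) _.
  apply: (set_inj_card_le (f := fun t j => a j + e j * t)) => // t u _ _.
  by move=> /(congr1 (@^~ i0)); rewrite /e eqxx !mul1r => /addrI.
have OL : O #<= [set: L] := card_le_trans (card_leT O) (card_fun_ord_le m Linf).
exact: card_eq_bijective (Cantor_Bernstein OL LO).
Qed.
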